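(* Let $C$ be a strictly convex subset of a topological real vector space $V$ and $f:C\to\mathbb{R}$ a continuous function (for the subspace topology on $C$). If $f$ is strictly quasi-convex, then $f$ is strictly sub-convex. In particular, if $f$ is continuous and strictly convex, then $f$ is strictly sub-convex.
   Context: Topological real vector spaces are not assumed Hausdorff. $f$ is strictly quasi-convex if $f((1-t)x+ty)<\max\{f(x),f(y)\}$ for all distinct $x,y\in C$, $t\in(0,1)$; strictly convex if $f((1-t)x+ty)<(1-t)f(x)+tf(y)$ for such $x,y,t$. $S_r(f)=\{x\in C: f(x)\le r\}$. For a subset $S$, $\mathrm{Aff}(S)$ is its affine hull; $\mathrm{ri}(S)$, $\mathrm{rc}(S)$ are the interior and closure of $S$ in the subspace topology of $\mathrm{Aff}(S)$. $]x,y[=\{(1-t)x+ty: t\in[0,1]\}\setminus\{x,y\}$. A set is strictly convex if for any two distinct $x,y$ in its relative closure, $]x,y[$ lies in its relative interior. $f$ is strictly sub-convex if $S_r(f)$ is strictly convex for every $r\in\mathbb{R}$. *)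

From HB Require Import structures.
From mathcomp Require Import all_boot all_order all_algebra.
From mathcomp Require Import all_classical all_reals all_analysis.
Set Implicit Arguments. Unset Strict Implicit. Unset Printing Implicit Defensive.
Import Order.TTheory GRing.Theory Num.Theory.
Import numFieldNormedType.Exports.
Local Open Scope classical_set_scope.
Local Open Scope ring_scope.

Section Defs.
Context {R : realType} {V : topologicalLmodType R}.

Definition affine_set (A : set V) : Prop :=
  forall x y (t : R), A x -> A y -> A ((1 - t) *: x + t *: y).

Definition Aff (S : set V) : set V :=
  \bigcap_(A in [set A : set V | affine_set A /\ S `<=` A]) A.

Definition ri (S : set V) : set V := @interior (subspace (Aff S)) S.
Definition rc (S : set V) : set V := @closure (subspace (Aff S)) S.

Definition open_segment (x y : V) : set V :=
  [set z | (exists t : R, 0 <= t <= 1 /\ z = (1 - t) *: x + t *: y)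
           /\ z <> x /\ z <> y].

Definition strictly_convex_set (S : set V) : Prop :=
  forall x y, rc S x -> rc S y -> x <> y -> open_segment x y `<=` ri S.

Definition strictly_quasi_convex (C : set V) (f : V -> R) : Prop :=
  forall x y (t : R), C x -> C y -> x <> y -> 0 < t < 1 ->
    f ((1 - t) *: x + t *: y) < Num.max (f x) (f y).

Definition strictly_convex_fun (C : set V) (f : V -> R) : Prop :=
  forall x y (t : R), C x -> C y -> x <> y -> 0 < t < 1 ->
    f ((1 - t) *: x + t *: y) < (1 - t) * f x + t * f y.

Definition sublevel (C : set V) (f : V -> R) (r : R) : set V :=
  [set x | C x /\ f x <= r].

Definition strictly_sub_convex (C : set V) (f : V -> R) : Prop :=
  forall r : R, strictly_convex_set (sublevel C f r).

End Defs.

From HB Require Import structures.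
From mathcomp Require Import all_boot all_order all_algebra.
From mathcomp Require Import all_classical all_reals all_analysis.
From mathcomp Require Import lra.
Import Order.TTheory GRing.Theory Num.Theory.
Import numFieldNormedType.Exports.
Local Open Scope classical_set_scope.
Local Open Scope ring_scope.

(* Let x, y be distinct points of the relative closure of S := S_r(f).  Strict
   convexity of C puts ]x,y[ inside ri C.  S is convex by quasi-convexity and
   relatively closed in C by continuity, so ]x,y[ lies in S; writing z in ]x,y[
   as a strict combination of two other points of ]x,y[ then gives f z < r.  As
   z is in ri C, continuity makes a neighbourhood of z in Aff S lie in S.  A
   strictly convex function is strictly quasi-convex. *)

Local Notation comb x y s := ((1 - s) *: x + s *: y).

Section Segments.
Context {R : realType} {V : topologicalLmodType R}.
Implicit Types (x y : V) (s t : R).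

Lemma combE x y s : comb x y s = x + s *: (y - x).
Proof. by rewrite scalerBl scale1r scalerBr -addrA [- _ + _]addrC. Qed.

Lemma comb0 x y : comb x y 0 = x.
Proof. by rewrite subr0 scale1r scale0r addr0. Qed.

Lemma comb1 x y : comb x y 1 = y.
Proof. by rewrite subrr scale0r add0r scale1r. Qed.

Lemma combxx x s : comb x x s = x.
Proof. by rewrite -scalerDl subrK scale1r. Qed.

Lemma comb_inj {x y} : x <> y -> injective (fun s => comb x y s).
Proof.
move=> xy s1 s2; rewrite /= !combE => /addrI/eqP.
rewrite -subr_eq0 -scalerBl scaler_eq0 !subr_eq0 => /orP[/eqP //|/eqP yx].
by case: xy.
Qed.

Lemma comb_comb x y a b t :
  comb (comb x y a) (comb x y b) t = comb x y (a + t * (b - a)).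
Proof.
rewrite !combE -addrA; congr (_ + _).
by rewrite opprD addrACA subrr add0r -scalerBl scalerA scalerDl.
Qed.

Lemma open_segment_comb {x y t} :
  x <> y -> 0 < t < 1 -> open_segment x y (comb x y t).
Proof.
move=> xy /andP[t0 t1]; split; first by exists t; rewrite !ltW.
split; [rewrite -[X in _ <> X](comb0 x y) | rewrite -[X in _ <> X](comb1 x y)].
  by move=> /(comb_inj xy) t_eq0; rewrite t_eq0 ltxx in t0.
by move=> /(comb_inj xy) t_eq1; rewrite t_eq1 ltxx in t1.
Qed.

Lemma open_segmentP x y z :
  open_segment x y z -> exists2 t, 0 < t < 1 & z = comb x y t.
Proof.
move=> [[t [/andP[t0 t1] ->]] [zx zy]]; exists t => //.
have t_neq0 : t != 0 by apply: contraPneq zx => ->; rewrite comb0.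
have t_neq1 : t != 1 by apply: contraPneq zy => ->; rewrite comb1.
by rewrite !lt_neqAle t0 t1 eq_sym t_neq0 t_neq1.
Qed.

End Segments.

Section RelativeTopology.
Context {R : realType} {V : topologicalLmodType R}.
Implicit Types (S C : set V) (z : V).

Lemma sub_Aff S : S `<=` Aff S.
Proof. by move=> x Sx A [_ SA]; apply: SA. Qed.

Lemma affine_Aff S : affine_set (Aff S).
Proof. by move=> x y t Ax Ay A PA; apply: PA.1; [exact: Ax | exact: Ay]. Qed.

Lemma AffS {S C} : S `<=` C -> Aff S `<=` Aff C.
Proof.
move=> SC x AffSx; apply: AffSx; split; first exact: affine_Aff.
exact: subset_trans (sub_Aff C).
Qed.

Lemma rcE S : rc S = closure S `&` Aff S.
Proof. by rewrite /rc closure_subspaceW //; exact: sub_Aff. Qed.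

Lemma sub_rc {S} : S `<=` rc S.
Proof.
by rewrite rcE => x Sx; split; [exact: subset_closure | exact: sub_Aff].
Qed.

Lemma rcS {S C} : S `<=` C -> rc S `<=` rc C.
Proof.
move=> SC x; rewrite !rcE => -[clx Ax].
by split; [exact: closureS clx | exact: AffS Ax].
Qed.

Lemma ri_sub {S} : ri S `<=` S.
Proof. exact: (@interior_subset (subspace (Aff S))). Qed.

Lemma riP {S z} : Aff S z -> ri S z <-> nbhs z [set w | Aff S w -> S w].
Proof.
move=> Az; rewrite /ri /interior.
change (@nbhs_subspace _ (Aff S) z S <-> within (Aff S) (nbhs z) S).
by rewrite nbhs_subspace_in.
Qed.

End RelativeTopology.

Section Convexity.
Context {R : realType} {V : topologicalLmodType R}.
Implicit Types (A C : set V) (f : V -> R) (x y : V) (r s t : R).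

Definition convex_comb_closed A :=
  forall x y s, A x -> A y -> 0 <= s <= 1 -> A (comb x y s).

Lemma convex_comb_closed_strict A :
  (forall x y t, A x -> A y -> x <> y -> 0 < t < 1 -> A (comb x y t)) ->
  convex_comb_closed A.
Proof.
move=> A_strict x y s Ax Ay /andP[s0 s1].
have [->|xy] := eqVneq x y; first by rewrite combxx.
have [->|s_neq0] := eqVneq s 0; first by rewrite comb0.
have [->|s_neq1] := eqVneq s 1; first by rewrite comb1.
apply: A_strict => //; first exact/eqP.
by rewrite !lt_neqAle s0 s1 eq_sym s_neq0 s_neq1.
Qed.

Lemma strictly_convex_set_convex {C} :
  strictly_convex_set C -> convex_comb_closed C.
Proof.
move=> sC; apply: convex_comb_closed_strict => x y t Cx Cy xy t01.
apply: ri_sub; apply: (sC x y) => //; [exact: sub_rc | exact: sub_rc |].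
exact: open_segment_comb.
Qed.

Lemma convex_sublevel {C f} r : convex_comb_closed C ->
  strictly_quasi_convex C f -> convex_comb_closed (sublevel C f r).
Proof.
move=> cC qf; apply: convex_comb_closed_strict => x y t [Cx fx] [Cy fy] xy t01.
split; first by case/andP: t01 => t0 t1; apply: cC; rewrite ?ltW.
apply/ltW/(lt_le_trans (qf _ _ _ Cx Cy xy t01)).
by rewrite ge_max fx fy.
Qed.

Lemma strictly_convex_fun_quasi_convex C f :
  strictly_convex_fun C f -> strictly_quasi_convex C f.
Proof.
move=> cf x y t Cx Cy xy t01; apply: (lt_le_trans (cf x y t Cx Cy xy t01)).
have fxM : f x <= Num.max (f x) (f y) by rewrite le_max lexx.
have fyM : f y <= Num.max (f x) (f y) by rewrite le_max lexx orbT.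
by case/andP: t01 => t0 t1; nra.
Qed.

End Convexity.

Section Continuity.
Context {R : realType} {V : topologicalLmodType R}.
Implicit Types (A C : set V) (f : V -> R) (x y : V) (r s : R).

Lemma nbhs_comb s x y (U : set V) : nbhs (comb x y s) U ->
  exists X Y, [/\ nbhs x X, nbhs y Y &
    forall a b, X a -> Y b -> U (comb a b s)].
Proof.
move=> nU.
have [/= PQ [P Q] sPQ] := @add_continuous V ((1 - s) *: x, s *: y) U nU.
have [/= XX [nsX nX] sX] := @scale_continuous R V (1 - s, x) _ P.
have [/= YY [nsY nY] sY] := @scale_continuous R V (s, y) _ Q.
exists XX.2, YY.2; split => // a b Xa Yb.
apply: (sPQ (_, _)); split => /=.
  by apply: (sX (_, _)); split => //; exact: nbhs_singleton nsX.
by apply: (sY (_, _)); split => //; exact: nbhs_singleton nsY.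
Qed.

Lemma convex_closure A : convex_comb_closed A -> convex_comb_closed (closure A).
Proof.
move=> cA x y s clx cly s01 U /nbhs_comb[X [Y [nX nY XYU]]].
have [a [Aa Xa]] := clx X nX; have [b [Ab Yb]] := cly Y nY.
by exists (comb a b s); split; [exact: cA | exact: XYU].
Qed.

Lemma continuous_within_nbhs {C f z} {U : set R} :
  {within C, continuous f} -> C z -> nbhs (f z) U ->
  nbhs z [set w | C w -> U (f w)].
Proof. by move=> cf Cz; exact: (proj1 (subspace_continuousP C f) cf z Cz). Qed.

Lemma closure_sublevel {C f r} : {within C, continuous f} ->
  closure (sublevel C f r) `&` C `<=` sublevel C f r.
Proof.
move=> cf z [clz Cz]; split => //; rewrite leNgt; apply/negP => r_lt_fz.
have := clz _ (continuous_within_nbhs cf Cz (lt_nbhsr r_lt_fz)).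
move=> [w [[Cw fw] /(_ Cw) r_lt_fw]].
by have := lt_le_trans r_lt_fw fw; rewrite ltxx.
Qed.

Lemma ri_sublevel {C f r z} : {within C, continuous f} ->
  Aff (sublevel C f r) z -> ri C z -> f z < r -> ri (sublevel C f r) z.
Proof.
move=> cf Az riCz fz; have SC : sublevel C f r `<=` C by move=> ? [].
have nC := (riP (AffS SC _ Az)).1 riCz.
have nf := continuous_within_nbhs cf (ri_sub _ riCz) (lt_nbhsl fz).
apply/(riP Az); apply: filterS (filterI nf nC) => w [fw Cw] Aw.
by have {}Cw := Cw (AffS SC _ Aw); split; [| exact/ltW/fw].
Qed.

End Continuity.

Section SubConvexity.
Context {R : realType} {V : topologicalLmodType R}.
Variables (C : set V) (f : V -> R).
Hypotheses (sC : strictly_convex_set C) (cf : {within C, continuous f})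
  (qf : strictly_quasi_convex C f).
Implicit Types (x y : V) (r s t : R).

Lemma rc_sublevel_comb r x y s :
  rc (sublevel C f r) x -> rc (sublevel C f r) y -> 0 <= s <= 1 ->
  C (comb x y s) -> sublevel C f r (comb x y s).
Proof.
rewrite !rcE => -[clx _] [cly _] s01 Cz.
apply: (closure_sublevel cf); split => //.
have := convex_sublevel r (strictly_convex_set_convex sC) qf.
by move=> /convex_closure; apply.
Qed.

Lemma open_segment_sublevel_lt r x y t :
  rc (sublevel C f r) x -> rc (sublevel C f r) y -> x <> y -> 0 < t < 1 ->
  f (comb x y t) < r.
Proof.
set S := sublevel C f r => rcx rcy xy /andP[t0 t1].
have SC : S `<=` C by move=> ? [].
have S_seg (u : R) : 0 < u < 1 -> S (comb x y u).
  move=> /andP[u0 u1]; apply: rc_sublevel_comb => //; first by rewrite !ltW.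
  apply: ri_sub; apply: (sC x y (rcS SC _ rcx) (rcS SC _ rcy) xy).
  by apply: open_segment_comb => //; rewrite u0 u1.
have [[C1 f1] [C2 f2]] : S (comb x y (t / 2)) /\ S (comb x y ((1 + t) / 2)).
  by split; apply: S_seg; apply/andP; split; lra.
have z12 : comb x y (t / 2) <> comb x y ((1 + t) / 2).
  have : t / 2 < (1 + t) / 2 by lra.
  by move=> + /(comb_inj xy) t_eq; rewrite t_eq ltxx.
have -> : comb x y t = comb (comb x y (t / 2)) (comb x y ((1 + t) / 2)) t.
  by rewrite comb_comb; congr (_ *: _ + _ *: _); lra.
apply: lt_le_trans (qf _ _ _ C1 C2 z12 _) _; first by rewrite t0 t1.
by rewrite ge_max f1 f2.
Qed.

Lemma strictly_quasi_convex_sub_convex : strictly_sub_convex C f.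
Proof.
move=> r x y rcx rcy xy z /open_segmentP[t t01 ->].
have SC : sublevel C f r `<=` C by move=> ? [].
apply: (ri_sublevel cf).
- by apply: affine_Aff; [move: rcx | move: rcy]; rewrite rcE => -[].
- exact: (sC x y (rcS SC _ rcx) (rcS SC _ rcy) xy _ (open_segment_comb xy t01)).
- exact: open_segment_sublevel_lt.
Qed.

End SubConvexity.

Theorem mainTheorem6 (R : realType) (V : topologicalLmodType R)
  (C : set V) (f : V -> R) :
  strictly_convex_set C ->
  {within C, continuous f} ->
  (strictly_quasi_convex C f -> strictly_sub_convex C f) /\
  (strictly_convex_fun C f -> strictly_sub_convex C f).
Proof.
move=> sC cf; split => [qf | /strictly_convex_fun_quasi_convex qf].
  exact: strictly_quasi_convex_sub_convex.
exact: strictly_quasi_convex_sub_convex.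
Qed.
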